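(* For every $c\in(0,1)$ there is $\epsilon_0>0$ such that for every $\epsilon\in(0,\epsilon_0)$ there is $n_0$ with the following property. Let $K=\epsilon^{-1}$, let $n\geq n_0$, and let $N=\epsilon 2^{\epsilon^{-1}}n$ (where $K$ and $N$ are integers). If $\Gamma$ is a simple $N$-blowup of $U(K)$, then there is an induced subgraph $G$ of $\Gamma$ such that every $\epsilon^{100}$-regular partition of $G$ has at least $2^{\epsilon^{-1+c}}$ parts.
   Context: Graphs $G=(V,E)$, $E\subseteq\binom V2$. $d_G(X,Y)=|\{(x,y)\in X\times Y:xy\in E\}|/(|X||Y|)$. A pair $(X,Y)$ is $\eta$-regular if $|d_G(X,Y)-d_G(X',Y')|\le\eta$ for all $X'\subseteq X,Y'\subseteq Y$ with $|X'|\ge\eta|X|,|Y'|\ge\eta|Y|$; a partition $\mathcal P$ of $V$ (not necessarily equitable; pairs $(X,X)$ allowed) is $\eta$-regular if at least $(1-\eta)|V|^2$ pairs in $V^2$ lie in $X\times Y$ for some $\eta$-regular $(X,Y)\in\mathcal P^2$. $U(K)$ is the bipartite graph with vertices $a_1,\dots,a_K$, $b_S$ ($S\subseteq[K]$) and edges $a_ib_S$ for $i\in S$. For a graph $G=(U,E)$, a simple $N$-blowup of $G$ is the graph with vertex set $\bigcup_{u\in U}V_u$ (disjoint, $|V_u|=N$) and edge set $\bigcup_{uu'\in E}\{xy:x\in V_u,y\in V_{u'}\}$. *)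

From HB Require Import structures.
From mathcomp Require Import all_boot all_order all_algebra.
From mathcomp Require Import boolp reals exp.
Set Implicit Arguments. Unset Strict Implicit. Unset Printing Implicit Defensive.
Import Order.TTheory GRing.Theory Num.Theory.
Local Open Scope ring_scope.

(* Vertices of U(K): a_i = inl i (i : 'I_K), b_S = inr S (S : {set 'I_K}). *)
Definition UK_vertex (K : nat) : finType := ('I_K + {set 'I_K})%type.

Definition UK_adj (K : nat) : rel (UK_vertex K) :=
  fun u v => match u, v with
             | inl i, inr T => i \in T
             | inr T, inl i => i \in T
             | _, _ => false
             end.

Definition is_simple_blowup (U : finType) (adjU : rel U) (N : nat)
  (V : finType) (E : rel V) : Prop :=
  exists f : V -> U,
    (forall u : U, #|[set x | f x == u]| = N) /\
    (forall x y : V, E x y = adjU (f x) (f y)).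

Definition induced (V : finType) (E : rel V) (S : {set V}) : rel V :=
  fun x y => [&& x \in S, y \in S & E x y].

Definition density (R : realType) (V : finType) (E : rel V) (X Y : {set V}) : R :=
  #|[set p : V * V | [&& p.1 \in X, p.2 \in Y & E p.1 p.2]]|%:R
  / (#|X| * #|Y|)%:R.

Definition regular_pair (R : realType) (V : finType) (E : rel V) (eta : R)
  (X Y : {set V}) : Prop :=
  forall X' Y' : {set V}, X' \subset X -> Y' \subset Y ->
    eta * #|X|%:R <= #|X'|%:R -> eta * #|Y|%:R <= #|Y'|%:R ->
    `|density R E X Y - density R E X' Y'| <= eta.

(* P is an eta-regular partition of the vertex set S of the graph (S, E):
   P partitions S (not necessarily equitably) and at least (1-eta)|S|^2 pairs
   of S^2 lie in X x Y for some eta-regular (X,Y) in P^2. *)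
Definition regular_partition (R : realType) (V : finType) (E : rel V)
  (S : {set V}) (eta : R) (P : {set {set V}}) : Prop :=
  partition P S /\
  (1 - eta) * (#|S| ^ 2)%:R <=
  #|[set p : V * V | [&& p.1 \in S, p.2 \in S &
       [exists X in P, exists Y in P,
          [&& p.1 \in X, p.2 \in Y & `[< regular_pair E eta X Y >]]]]]|%:R.

From HB Require Import structures.
From mathcomp Require Import all_boot all_order all_algebra.
From mathcomp Require Import boolp reals exp.
From mathcomp Require Import lra ring.
Import Order.TTheory GRing.Theory Num.Theory.
Set Implicit Arguments. Unset Strict Implicit. Unset Printing Implicit Defensive.

(* Keep every vertex over the a_i but only n vertices over each b_T: the
   induced subgraph G has K N + 2^K n = 2 K N vertices, half of them over the
   b_T.  In an eta-regular partition P of G, let a part X meet the fibre A_i of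
   a_i in at least eta |X| vertices, and let a part Y "split" at i, i.e. contain
   at least eta |Y| vertices over some b_T with i in T and as many with i not in
   T.  Then (X, Y) is irregular, with densities 1 and 0 on subpairs.  Almost
   all of A_i lies in such heavy parts X, so the splitting parts at i cover few
   vertices.  Every remaining b-vertex of a part Y either has exactly the
   majority type of Y (at most n such vertices per part) or is in the minority
   of Y at some coordinate i where Y does not split, which costs at most
   eta |G| per coordinate.  Summing, 2^K n <= |P| n + O(N) with 2^K n = K N,
   whence |P| >= 2^(K-1) >= 2^(eps^(c-1)). *)

Lemma card_sets (T : finType) : #|{set T}| = (2 ^ #|T|)%N.
Proof. by rewrite -(cardsT {set T}) -powersetT card_powerset cardsT. Qed.

Lemma card_bigcup_le (T I : finType) (P : pred I) (F : I -> {set T}) :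
  (#|\bigcup_(i | P i) F i| <= \sum_(i | P i) #|F i|)%N.
Proof.
elim/big_rec2: _ => [|i X m _ IH]; first by rewrite cards0.
by apply: leq_trans (leq_card_setU _ _) _; rewrite leq_add2l.
Qed.

Lemma card_by_fibres (U V : finType) (f : V -> U) (A : {set V}) :
  #|A| = (\sum_u #|A :&: [set x | f x == u]|)%N.
Proof.
rewrite -sum1_card (partition_big f predT) //; apply: eq_bigr => u _.
by rewrite sum1dep_card; apply: eq_card => x; rewrite !inE.
Qed.

Local Open Scope ring_scope.

Section Regularity.
Variables (R : realType) (V : finType) (E : rel V).

Lemma density_complete (X Y : {set V}) :
  X != set0 -> Y != set0 -> {in X & Y, forall x y, E x y} ->
  density R E X Y = 1.
Proof.
move=> X0 Y0 XY; rewrite /density.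
have -> : [set p : V * V | [&& p.1 \in X, p.2 \in Y & E p.1 p.2]] = setX X Y.
  apply/setP => -[x y]; rewrite !inE /=.
  by case: (boolP (x \in X)) => xX; case: (boolP (y \in Y)) => yY //=; rewrite XY.
by rewrite cardsX mulfV // pnatr_eq0 muln_eq0 !cards_eq0 negb_or X0 Y0.
Qed.

Lemma density_edgeless (X Y : {set V}) :
  {in X & Y, forall x y, ~~ E x y} -> density R E X Y = 0.
Proof.
move=> XY; rewrite /density.
have -> : [set p : V * V | [&& p.1 \in X, p.2 \in Y & E p.1 p.2]] = set0.
  apply/setP => -[x y]; rewrite !inE /=.
  by apply/and3P => -[xX yY]; apply/negP; apply: XY.
by rewrite cards0 mul0r.
Qed.

Lemma complete_edgeless_not_regular (eta : R) (X Y X' Y1 Y0 : {set V}) :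
  eta < 2^-1 -> X' \subset X -> Y1 \subset Y -> Y0 \subset Y ->
  eta * #|X|%:R <= #|X'|%:R -> eta * #|Y|%:R <= #|Y1|%:R ->
  eta * #|Y|%:R <= #|Y0|%:R -> X' != set0 -> Y1 != set0 ->
  {in X' & Y1, forall x y, E x y} -> {in X' & Y0, forall x y, ~~ E x y} ->
  ~ regular_pair E eta X Y.
Proof.
move=> eta_small sX' sY1 sY0 bigX' bigY1 bigY0 X'0 Y10 comp edgeless reg.
have := reg _ _ sX' sY1 bigX' bigY1; rewrite (density_complete X'0 Y10 comp).
have := reg _ _ sX' sY0 bigX' bigY0; rewrite (density_edgeless edgeless) subr0.
rewrite !ler_norml; set d := density R E X Y; lra.
Qed.

End Regularity.

Section RegularPartition.
Variables (R : realType) (V : finType) (E : rel V) (S : {set V}) (eta : R)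
  (P : {set {set V}}).
Hypothesis eta_ge0 : 0 <= eta.
Hypothesis regP : regular_partition E S eta P.

Let partP : partition P S := proj1 regP.

Lemma card_bigcup_small_subparts (Q : pred {set V}) (F : {set V} -> {set V}) :
  (forall X, X \in P -> Q X -> #|F X|%:R <= eta * #|X|%:R) ->
  #|\bigcup_(X in P | Q X) F X|%:R <= eta * #|S|%:R.
Proof.
move=> small; apply: le_trans (_ : (\sum_(X in P | Q X) #|F X|)%:R <= _).
  by rewrite ler_nat card_bigcup_le.
rewrite natr_sum (card_partition partP) natr_sum mulr_sumr.
rewrite [X in _ <= X](bigID Q) /= -[X in X <= _]addr0 lerD ?sumr_ge0 //.
- by apply: ler_sum => X /andP[]; apply: small.
- by move=> X _; rewrite mulr_ge0.
Qed.

Lemma card_irregular_rect (H C : {set V}) :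
  H \subset S -> C \subset S ->
  {in H & C, forall x y, ~ regular_pair E eta (pblock P x) (pblock P y)} ->
  (#|H| * #|C|)%:R <= eta * (#|S| ^ 2)%:R.
Proof.
move=> /subsetP HS /subsetP CS irreg.
have [_] := regP; set Good := [set p : V * V | _] => cardGood.
have GoodS : Good \subset setX S S.
  by apply/subsetP => -[x y]; rewrite !inE => /and3P[-> ->].
have HC_bad : setX H C \subset setX S S :\: Good.
  apply/subsetP => -[x y]; rewrite !inE /= => /andP[xH yC].
  rewrite HS ?CS //= andbT.
  apply/negP => /existsP[X /andP[XP /existsP[Y /andP[YP]]]].
  case/and3P=> xX yY /asboolP.
  case/and3P: partP => _ trivP _.
  by rewrite -(def_pblock trivP XP xX) -(def_pblock trivP YP yY); apply: irreg.
have Good_le : (#|Good| <= #|S| * #|S|)%N by rewrite -cardsX subset_leq_card.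
have := subset_leq_card HC_bad; rewrite cardsD (setIidPr GoodS) !cardsX.
rewrite -(ler_nat R) natrB // mulnn => le_bad.
apply: le_trans le_bad _; lra.
Qed.

End RegularPartition.

Section TrimmedBlowup.
Variables (K N n : nat) (V : finType) (f : V -> UK_vertex K).
Hypothesis card_fibre : forall u, #|[set x | f x == u]| = N.
Hypothesis n_le_N : (n <= N)%N.

Definition fibre u : {set V} := [set x | f x == u].

Definition bpart (T : {set 'I_K}) : {set V} :=
  [set x in take n (enum (fibre (inr T)))].

Definition trim : {set V} :=
  [set x | if f x is inr T then x \in bpart T else true].

Definition trim_b : {set V} :=
  [set x in trim | if f x is inr _ then true else false].

Lemma bpart_sub T : bpart T \subset fibre (inr T).
Proof. by apply/subsetP => x; rewrite inE => /mem_take; rewrite mem_enum. Qed.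

Lemma card_bpart T : #|bpart T| = n.
Proof.
have uniq_take : uniq (take n (enum (fibre (inr T)))).
  exact/take_uniq/enum_uniq.
rewrite cardsE (card_uniqP uniq_take) size_take -cardE card_fibre.
by case: ltngtP n_le_N.
Qed.

Lemma trimI_fibre u :
  trim :&: fibre u = if u is inr T then bpart T else fibre u.
Proof.
case: u => [i | T]; apply/setP => x; rewrite !inE.
  by case: (f x) => // T; rewrite andbF.
case: eqP => [-> | fx]; first by rewrite andbT inE.
rewrite andbF; apply/esym/negP => xT.
by move/subsetP: (bpart_sub T) => /(_ x); rewrite !inE => /(_ xT) /eqP.
Qed.

Lemma trim_bI_fibre u :
  trim_b :&: fibre u = if u is inr T then bpart T else set0.
Proof.
case: u => [i | T]; last rewrite -(trimI_fibre (inr T));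
  by apply/setP => x; rewrite !inE; case: eqP => [-> | _]; rewrite ?andbF ?andbT.
Qed.

Lemma card_trim : #|trim| = (K * N + 2 ^ K * n)%N.
Proof.
rewrite (card_by_fibres f) big_sumType /=.
under eq_bigr do rewrite trimI_fibre card_fibre.
under [X in (_ + X)%N]eq_bigr do rewrite trimI_fibre card_bpart.
by rewrite !sum_nat_const card_sets !card_ord mulnC.
Qed.

Lemma card_trim_b : #|trim_b| = (2 ^ K * n)%N.
Proof.
rewrite (card_by_fibres f) big_sumType /=.
under eq_bigr do rewrite trim_bI_fibre cards0.
under [X in (_ + X)%N]eq_bigr do rewrite trim_bI_fibre card_bpart.
by rewrite big_const_idem ?addn0 // sum_nat_const card_sets card_ord.
Qed.

Variables (E : rel V) (R : realType) (eta : R) (P : {set {set V}}).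
Hypothesis adj_E : forall x y, E x y = UK_adj (f x) (f y).
Hypothesis eta_gt0 : 0 < eta.
Hypothesis eta_lt_half : eta < 2^-1.
Hypothesis regP : regular_partition (induced E trim) trim eta P.

Let partP : partition P trim := proj1 regP.
Let trivP : trivIset P. Proof. by case/and3P: partP. Qed.
Let coverP : cover P = trim. Proof. by case/and3P: partP => /eqP. Qed.

Let part_sub Y : Y \in P -> Y \subset trim.
Proof. by rewrite -coverP; apply: bigcup_sup. Qed.

Let pblockP x : x \in trim -> pblock P x \in P /\ x \in pblock P x.
Proof. by rewrite -coverP => x_cover; rewrite pblock_mem // mem_pblock. Qed.

Definition afibre i := fibre (inl i).

Definition side (b : bool) (Y : {set V}) (i : 'I_K) : {set V} :=
  [set y in Y | if f y is inr T then (i \in T) == b else false].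

Definition splits (Y : {set V}) i :=
  (eta * #|Y|%:R <= #|side true Y i|%:R) &&
  (eta * #|Y|%:R <= #|side false Y i|%:R).

Definition majority_type (Y : {set V}) :=
  [set i | eta * #|Y|%:R <= #|side true Y i|%:R].

Definition minority (Y : {set V}) i := side (i \notin majority_type Y) Y i.

Definition heavy i :=
  [set x in afibre i | eta * #|pblock P x|%:R <= #|pblock P x :&: afibre i|%:R].

Definition split_cover i := \bigcup_(Y in P | splits Y i) Y.

Definition atypical i := \bigcup_(Y in P | ~~ splits Y i) minority Y i.

Definition typical := \bigcup_(Y in P) bpart (majority_type Y).

Lemma afibre_sub i : afibre i \subset trim.
Proof. by rewrite /afibre -(trimI_fibre (inl i)) subsetIl. Qed.

Lemma side_sub b (Y : {set V}) i : side b Y i \subset Y.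
Proof. by apply/subsetP => y; rewrite inE => /andP[]. Qed.

Lemma heavy_split_irregular i :
  {in heavy i & split_cover i, forall x y,
    ~ regular_pair (induced E trim) eta (pblock P x) (pblock P y)}.
Proof.
move=> x y; rewrite inE => /andP[x_ai heavy_x] /bigcupP[Y /andP[YP splitY] yY].
rewrite (def_pblock trivP YP yY); set X := pblock P x in heavy_x *.
have [XP xX] := pblockP (subsetP (afibre_sub i) x x_ai).
have [big1 big0] := andP splitY.
have X_trim := subsetP (part_sub XP); have Y_trim := subsetP (part_sub YP).
apply: (complete_edgeless_not_regular eta_lt_half (subsetIl X (afibre i))
  (side_sub true Y i) (side_sub false Y i) heavy_x big1 big0).
- by apply/set0Pn; exists x; rewrite inE xX.
- rewrite -card_gt0 -(ltr_nat R); apply: lt_le_trans big1.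
  by rewrite mulr_gt0 // ltr0n card_gt0; apply/set0Pn; exists y.
- move=> x' y' /setIP[x'X]; rewrite !inE => /eqP fx' /andP[y'Y].
  by rewrite /induced X_trim // Y_trim // adj_E fx'; case: (f y') => // T /eqP.
- move=> x' y' /setIP[x'X]; rewrite !inE => /eqP fx' /andP[y'Y].
  by rewrite /induced X_trim // Y_trim // adj_E fx'; case: (f y') => //= T /eqP->.
Qed.

Lemma card_heavy i : N%:R - eta * #|trim|%:R <= #|heavy i|%:R.
Proof.
pose light (X : {set V}) := ~~ (eta * #|X|%:R <= #|X :&: afibre i|%:R).
pose light_part := \bigcup_(X in P | light X) (X :&: afibre i).
have card_light : #|light_part|%:R <= eta * #|trim|%:R.
  apply: (card_bigcup_small_subparts (ltW eta_gt0) regP) => X _.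
  by rewrite /light -ltNge => /ltW.
have afibre_cover : afibre i \subset heavy i :|: light_part.
  apply/subsetP => x x_ai; have [XP xX] := pblockP (subsetP (afibre_sub i) x x_ai).
  rewrite in_setU [x \in heavy i]inE x_ai /=.
  case: (boolP (light (pblock P x))) => [lightX | ]; last by rewrite negbK => ->.
  by apply/orP; right; apply/bigcupP; exists (pblock P x); rewrite ?XP // inE xX.
have := leq_trans (subset_leq_card afibre_cover) (leq_card_setU _ _).
rewrite card_fibre -(ler_nat R) natrD; lra.
Qed.

Lemma card_split_cover i :
  (N%:R - eta * #|trim|%:R) * #|split_cover i|%:R <= eta * (#|trim| ^ 2)%:R.
Proof.
have heavy_trim : heavy i \subset trim.
  by apply: subset_trans (afibre_sub i); apply/subsetP => x; rewrite inE => /andP[].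
have split_trim : split_cover i \subset trim.
  by apply/bigcupsP => Y /andP[YP _]; apply: part_sub.
have := card_irregular_rect regP heavy_trim split_trim (@heavy_split_irregular i).
apply: le_trans.
by rewrite natrM ler_wpM2r // card_heavy.
Qed.

Lemma card_minority (Y : {set V}) i :
  ~~ splits Y i -> #|minority Y i|%:R <= eta * #|Y|%:R.
Proof.
rewrite /minority /splits inE.
case: (boolP (_ <= #|side true Y i|%:R)) => [_ | small] /=.
  by rewrite -ltNge => /ltW.
by rewrite ltW // ltNge.
Qed.

Lemma card_atypical i : #|atypical i|%:R <= eta * #|trim|%:R.
Proof.
apply: (card_bigcup_small_subparts (ltW eta_gt0) regP) => Y _.
exact: card_minority.
Qed.

Lemma card_typical : (#|typical| <= #|P| * n)%N.
Proof.
apply: leq_trans (card_bigcup_le _ _) _.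
by under eq_bigr do rewrite card_bpart; rewrite sum_nat_const.
Qed.

Lemma trim_b_cover :
  trim_b \subset typical :|: \bigcup_i (atypical i :|: split_cover i).
Proof.
apply/subsetP => y; rewrite inE => /andP[y_trim]; case fy: (f y) => [//|T] _.
have [YP yY] := pblockP y_trim; set Y := pblock P y in YP yY.
have yT : y \in bpart T by move: y_trim; rewrite inE fy.
case: (pickP (fun i => (i \in T) != (i \in majority_type Y))) => [i Ti | same].
  have y_min : y \in minority Y i.
    by rewrite inE yY fy; move: Ti; case: (i \in T); case: (i \in majority_type Y).
  rewrite inE; apply/orP; right; apply/bigcupP; exists i => //.
  rewrite inE; case: (boolP (splits Y i)) => splitY; apply/orP;
    [right | left]; apply/bigcupP; by exists Y; rewrite ?YP ?splitY.
have typeY : T = majority_type Y by apply/setP => j; apply/eqP/negbFE/same.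
by rewrite inE; apply/orP; left; apply/bigcupP; exists Y; rewrite -?typeY.
Qed.

Lemma card_trim_b_le :
  (2 ^ K * n)%:R <= (#|P| * n)%:R + K%:R * (eta * #|trim|%:R) +
                    \sum_i #|split_cover i|%:R.
Proof.
have cover_le : (2 ^ K * n <= #|P| * n + \sum_i (#|atypical i| + #|split_cover i|))%N.
  rewrite -card_trim_b; apply: leq_trans (subset_leq_card trim_b_cover) _.
  apply: leq_trans (leq_card_setU _ _) _; apply: leq_add; first exact: card_typical.
  apply: leq_trans (card_bigcup_le _ _) _.
  by apply: leq_sum => i _; apply: leq_card_setU.
apply: le_trans (_ : _ <= (#|P| * n)%:R +
                          \sum_i (#|atypical i|%:R + #|split_cover i|%:R)) _.
  by under eq_bigr do rewrite -natrD; rewrite -natr_sum -natrD ler_nat.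
rewrite big_split /= addrA lerD2r lerD2l.
apply: le_trans (ler_sum _ (fun i _ => card_atypical i)) _.
by rewrite sumr_const card_ord mulr_natl.
Qed.

Lemma card_regular_partition_trim :
  (18 <= K)%N -> (K * N = 2 ^ K * n)%N -> (0 < n)%N -> eta * K%:R ^+ 3 <= 1 ->
  (2 ^ K.-1 <= #|P|)%N.
Proof.
(* |G| = 2 K N gives sum_i |split_cover i| <= 8 N and K eta |G| <= N, so
   2^K n = K N <= |P| n + 9 N, and 9 N <= K N / 2 as K >= 18. *)
move=> K_ge18 KN_eq n_gt0 etaK3.
set k : R := K%:R; set nN : R := N%:R.
have k_ge18 : 18 <= k by rewrite (ler_nat R 18).
have nN_gt0 : 0 < nN.
  rewrite ltr0n; have : (0 < K * N)%N by rewrite KN_eq muln_gt0 expn_gt0 n_gt0.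
  by rewrite muln_gt0 => /andP[].
have trim_eq : #|trim|%:R = 2 * k * nN by rewrite card_trim -KN_eq natrD natrM; ring.
have etak2 : eta * k ^+ 2 * 18 <= 1.
  have : 0 <= eta * k ^+ 2 by rewrite mulr_ge0 ?sqr_ge0 ?ltW.
  nra.
have split_le i : #|split_cover i|%:R <= 8 * (eta * k ^+ 2) * nN.
  have c_ge0 : 0 <= #|split_cover i|%:R :> R by [].
  have := card_split_cover i; rewrite natrX trim_eq => le_split.
  have half_le : nN / 2 * #|split_cover i|%:R <=
                 (nN - eta * (2 * k * nN)) * #|split_cover i|%:R.
    by rewrite ler_wpM2r //; nra.
  rewrite -(ler_pM2l nN_gt0); lra.
have sum_split : \sum_i #|split_cover i|%:R <= 8 * nN.
  apply: le_trans (ler_sum _ (fun i _ => split_le i)) _.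
  rewrite sumr_const card_ord -mulr_natl -/k; nra.
have := card_trim_b_le; rewrite -KN_eq natrM -/k -/nN trim_eq => le_b.
have : k * nN <= 2 * (#|P| * n)%:R by nra.
rewrite -natrM -natrM ler_nat KN_eq mulnA leq_pmul2r // -(prednK (ltn_trans _ K_ge18)) //.
by rewrite expnS leq_pmul2l.
Qed.

End TrimmedBlowup.

Lemma powR_sub1_le_pred (R : realType) (c eps : R) (K : nat) :
  0 < c -> 0 < eps -> eps <= powR 2 (- c^-1) -> K%:R = eps^-1 -> (2 <= K)%N ->
  powR eps (c - 1) <= K.-1%:R.
Proof.
move=> c_gt0 eps_gt0 eps_le K_eq K_ge2.
have epsc_le : powR eps c <= 2^-1.
  have -> : 2^-1 = powR (powR 2 (- c^-1)) c :> R.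
    by rewrite -powRrM mulNr mulVf ?gt_eqF // powR_inv1.
  apply: ge0_ler_powR => //; first exact: ltW.
  - by rewrite nnegrE ltW.
  - by rewrite nnegrE powR_ge0.
rewrite powRB; last by rewrite (gt_eqF eps_gt0) implybT.
rewrite powRr1; last exact: ltW.
rewrite -K_eq.
rewrite -subn1 natrB ?(ltnW K_ge2) //.
have := powR_ge0 eps c; move: K_ge2; rewrite -(ler_nat R); nra.
Qed.

Lemma eps_power_bounds (R : realType) (eps : R) (K : nat) :
  0 < eps -> eps < 64^-1 -> K%:R = eps^-1 ->
  [/\ (64 <= K)%N, eps ^+ 100 < 2^-1 & eps ^+ 100 * K%:R ^+ 3 <= 1].
Proof.
move=> eps_gt0 eps_lt64 K_eq.
have Keps : K%:R * eps = 1 by rewrite K_eq mulVf ?gt_eqF.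
have eps_le1 : eps <= 1.
  by apply: ltW; apply: lt_trans eps_lt64 _; rewrite invf_lt1 ?ltr1n.
split; first by rewrite -(ler_nat R); nra.
  apply: le_lt_trans (ler_wiXn2l (ltW eps_gt0) eps_le1 (isT : (1 <= 100)%N)) _.
  by rewrite expr1; apply: lt_trans eps_lt64 _; rewrite ltf_pV2 ?posrE ?ltr0n ?ltr_nat.
rewrite -[100%N]/(97 + 3)%N exprD -mulrA -exprMn (mulrC eps) Keps expr1n mulr1.
exact: exprn_ile1 (ltW eps_gt0) eps_le1.
Qed.

Theorem proposition6p4 (R : realType) (c : R) :
  0 < c < 1 ->
  exists eps0 : R, 0 < eps0 /\
  forall eps : R, 0 < eps < eps0 ->
  exists n0 : nat,
  forall K n N : nat,
    K%:R = eps^-1 ->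
    (n0 <= n)%N ->
    N%:R = eps * 2 ^+ K * n%:R ->
    forall (V : finType) (E : rel V),
      is_simple_blowup (@UK_adj K) N E ->
      exists S : {set V},
        forall P : {set {set V}},
          regular_partition (induced E S) S (eps ^+ 100) P ->
          powR 2 (powR eps (c - 1)) <= #|P|%:R.
Proof.
move=> /andP[c_gt0 _].
exists (Num.min 64^-1 (powR 2 (- c^-1))); split.
  by rewrite lt_min invr_gt0 powR_gt0 ?ltr0n.
move=> eps /andP[eps_gt0]; rewrite lt_min => /andP[eps_lt64 eps_ltc].
exists 1%N => K n N K_eq n_gt0 N_eq V E [f [card_fibre adj_E]].
have [K_ge64 eta_lt_half etaK3] := eps_power_bounds eps_gt0 eps_lt64 K_eq.
have Keps : K%:R * eps = 1 by rewrite K_eq mulVf ?gt_eqF.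
have KN_eq : (K * N = 2 ^ K * n)%N.
  by apply/eqP; rewrite -(eqr_nat R) !natrM natrX N_eq !mulrA Keps mul1r.
have n_le_N : (n <= N)%N.
  rewrite -(leq_pmul2l (leq_trans _ K_ge64)) // KN_eq leq_pmul2r //.
  exact/ltnW/ltn_expl.
exists (trim n f) => P regP.
have exp_le := powR_sub1_le_pred c_gt0 eps_gt0 (ltW eps_ltc) K_eq (leq_trans _ K_ge64).
apply: le_trans (ler_powR _ (exp_le isT)) _; first by rewrite ler1n.
rewrite powR_mulrn ?ler0n // -natrX ler_nat.
exact: (card_regular_partition_trim card_fibre n_le_N adj_E
  (exprn_gt0 _ eps_gt0) eta_lt_half regP (leq_trans _ K_ge64) KN_eq n_gt0 etaK3).
Qed.
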